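(* Let $A\in \mathbb{Z}^{m\times n}$, $b\in \mathbb{Z}^m$ and $p$ a prime. Then exactly one of the following holds: either $Ax=b$ has a $p$-adic solution $x$, or there exists $y\in \mathbb{R}^m$ such that $y^\top A$ is integral and $y^\top b$ is not a $p$-adic rational.
   Context: A $p$-adic rational is a number $a/p^k$ with $a,k\in\mathbb{Z}$, $k\ge0$; a vector is $p$-adic if all entries are $p$-adic rationals. *)

From HB Require Import structures.
From mathcomp Require Import all_boot all_order all_algebra.
From mathcomp Require Import Rstruct.
From Stdlib Require Import Reals.
Set Implicit Arguments. Unset Strict Implicit. Unset Printing Implicit Defensive.
Import Order.TTheory GRing.Theory Num.Theory.
Local Open Scope ring_scope.

Definition padic_rat (p : nat) (x : R) : Prop :=
  exists (a : int) (k : nat), x = a%:~R / (p%:R ^+ k).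

Definition integral (x : R) : Prop := exists z : int, x = z%:~R.

Definition intmx (m n : nat) (A : 'M[int]_(m, n)) : 'M[R]_(m, n) :=
  map_mx (fun z : int => z%:~R) A.

(* Write A = L D R in Smith normal form, with L and R unimodular.  A change of
   variables by an integer matrix with integer inverse preserves both p-adic
   solvability and the existence of obstructions y, so it suffices to treat the
   diagonal system D t = c with c = L^-1 b, which decouples into the scalar
   equations d_i t_i = c_i.  One of them has no p-adic solution only if either
   d_i <> 0 and c_i / d_i is not p-adic, and then y = e_i / d_i is an obstruction,
   or d_i = 0 <> c_i, and then y = e_i / ((p + 1) c_i) is one.  Conversely no
   obstruction can coexist with a p-adic solution x, since y b = (y A) x is an
   integral combination of p-adic rationals. *)
From HB Require Import structures.
From mathcomp Require Import all_boot all_order all_algebra.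
From mathcomp Require Import Rstruct.
From Stdlib Require Import Rdefinitions Classical.
Set Implicit Arguments. Unset Strict Implicit. Unset Printing Implicit Defensive.
Import Order.TTheory GRing.Theory Num.Theory.
Local Open Scope ring_scope.

(* Both were defined with their real argument in R_scope, where [x * y] would
   mean [Rmult] rather than the ring product. *)
#[local] Arguments padic_rat p x%_ring_scope.
#[local] Arguments integral x%_ring_scope.

Lemma integral_int (z : int) : integral z%:~R.
Proof. by exists z. Qed.

Lemma integralD x y : integral x -> integral y -> integral (x + y).
Proof. by move=> [a ->] [b ->]; exists (a + b); rewrite rmorphD. Qed.

Lemma integralM x y : integral x -> integral y -> integral (x * y).
Proof. by move=> [a ->] [b ->]; exists (a * b); rewrite rmorphM. Qed.

Lemma integral_sum (I : finType) (F : I -> R) :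
  (forall i, integral (F i)) -> integral (\sum_i F i).
Proof.
by move=> intF; apply: big_ind => //; [exact: integral_int 0 | exact: integralD].
Qed.

Definition integral_mx m n (M : 'M[R]_(m, n)) := forall i j, integral (M i j).

Lemma integral_intmx m n (A : 'M[int]_(m, n)) : integral_mx (intmx A).
Proof. by move=> i j; rewrite mxE; apply: integral_int. Qed.

Lemma integral_mulmx m n k (M : 'M[R]_(m, n)) (N : 'M[R]_(n, k)) :
  integral_mx M -> integral_mx N -> integral_mx (M *m N).
Proof.
by move=> intM intN i j; rewrite mxE; apply: integral_sum => l; apply: integralM.
Qed.

Lemma intmxM m n k (A : 'M[int]_(m, n)) (B : 'M[int]_(n, k)) :
  intmx (A *m B) = intmx A *m intmx B.
Proof. exact: map_mxM. Qed.

Lemma intmx_mulmxV n (U : 'M[int]_n) :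
  U \in unitmx -> intmx U *m intmx (invmx U) = 1%:M.
Proof. by move=> unitU; rewrite -intmxM mulmxV //; apply: map_mx1. Qed.

Lemma intmx_mulVmx n (U : 'M[int]_n) :
  U \in unitmx -> intmx (invmx U) *m intmx U = 1%:M.
Proof. by move=> unitU; rewrite -intmxM mulVmx //; apply: map_mx1. Qed.

Section PadicRationals.

Variable p : nat.
Hypothesis p_gt0 : (0 < p)%nat.

Lemma expr_p_neq0 k : (p%:R : R) ^+ k != 0.
Proof. by rewrite expf_neq0 // pnatr_eq0 -lt0n. Qed.

Lemma padic_int (z : int) : padic_rat p z%:~R.
Proof. by exists z, 0%nat; rewrite expr0 divr1. Qed.

Lemma padicD x y : padic_rat p x -> padic_rat p y -> padic_rat p (x + y).
Proof.
move=> [a [k ->]] [b [l ->]].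
exists (a * (p%:Z ^+ l) + b * (p%:Z ^+ k)), (k + l)%nat.
rewrite exprD rmorphD !rmorphM /= !rmorphXn /= -[(p%:Z)%:~R]/(p%:R : R).
by rewrite mulrDl invfM !mulrA mulfK ?expr_p_neq0 // mulrAC mulfK ?expr_p_neq0.
Qed.

Lemma padicM_integral x y : integral x -> padic_rat p y -> padic_rat p (x * y).
Proof. by move=> [z ->] [a [k ->]]; exists (z * a), k; rewrite intrM -mulrA. Qed.

Lemma padic_sum (I : finType) (F : I -> R) :
  (forall i, padic_rat p (F i)) -> padic_rat p (\sum_i F i).
Proof.
by move=> padicF; apply: big_ind => //; [exact: padic_int 0 | exact: padicD].
Qed.

Lemma padic_mulmx_col m n (M : 'M[R]_(m, n)) (x : 'cV[R]_n) :
  integral_mx M -> (forall j, padic_rat p (x j 0)) ->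
  forall i, padic_rat p ((M *m x) i 0).
Proof.
by move=> intM padic_x i; rewrite mxE; apply: padic_sum => j; apply: padicM_integral.
Qed.

(* Since p + 1 is coprime to p, it cannot divide a power of p. *)
Lemma not_padic_inv_succ : ~ padic_rat p (p.+1%:R^-1).
Proof.
move=> [a [k def_inv]].
have pk_eq : (expn p k)%:R = a%:~R * p.+1%:R :> R.
  have def_a : a%:~R = p.+1%:R^-1 * p%:R ^+ k :> R.
    by rewrite def_inv divfK ?expr_p_neq0.
  by rewrite def_a mulrAC mulVf ?pnatr_eq0 // mul1r natrX.
have dvd_pk : (p.+1 %| expn p k)%nat.
  rewrite -[(expn p k)]/`|(expn p k)%:Z|%nat -[p.+1]/`|p.+1%:Z|%nat -dvdzE.
  apply/dvdzP; exists a; apply: (@intr_inj R).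
  by rewrite rmorphM /= -!pmulrn pk_eq.
have := coprime_dvdr dvd_pk (coprimeXr k (coprimeSn p)).
by rewrite /coprime gcdnn eqSS eqn0Ngt p_gt0.
Qed.

Definition padic_solvable m n (M : 'M[R]_(m, n)) (v : 'cV[R]_m) :=
  exists x : 'cV[R]_n, (forall i, padic_rat p (x i 0)) /\ M *m x = v.

Definition padic_obstruction m n (M : 'M[R]_(m, n)) (v : 'cV[R]_m) :=
  exists y : 'rV[R]_m,
    (forall j, integral ((y *m M) 0 j)) /\ ~ padic_rat p ((y *m v) 0 0).

Lemma padic_solvable_obstruction_exclusive m n (M : 'M[R]_(m, n))
    (v : 'cV[R]_m) :
  integral_mx M -> ~ (padic_solvable M v /\ padic_obstruction M v).
Proof.
move=> intM [[x [padic_x <-]] [y [int_yM not_padic]]]; apply: not_padic.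
rewrite mulmxA; apply: padic_mulmx_col => // i j.
by rewrite ord1; apply: int_yM.
Qed.

Lemma padic_solvable_mulmx k m n (L : 'M[R]_(k, m)) (M : 'M[R]_(m, n))
    (U U' : 'M[R]_n) v :
  integral_mx U' -> U *m U' = 1%:M ->
  padic_solvable M v -> padic_solvable (L *m M *m U) (L *m v).
Proof.
move=> intU' UU' [x [padic_x <-]]; exists (U' *m x); split.
  exact: padic_mulmx_col.
by rewrite -!mulmxA (mulmxA U) UU' mul1mx.
Qed.

Lemma padic_obstruction_mulmx m n k (L L' : 'M[R]_m) (M : 'M[R]_(m, n))
    (U : 'M[R]_(n, k)) v :
  integral_mx U -> L' *m L = 1%:M ->
  padic_obstruction M v -> padic_obstruction (L *m M *m U) (L *m v).
Proof.
move=> intU L'L [y [int_yM not_padic]]; exists (y *m L'); split.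
  rewrite !mulmxA -(mulmxA y) L'L mulmx1; apply: integral_mulmx => // i j.
  by rewrite ord1; apply: int_yM.
by rewrite mulmxA -(mulmxA y) L'L mulmx1.
Qed.

Lemma padic_obstruction_row m n (M : 'M[R]_(m, n)) (v : 'cV[R]_m) i a :
  (forall j, integral (a * M i j)) -> ~ padic_rat p (a * v i 0) ->
  padic_obstruction M v.
Proof.
move=> int_aM not_padic; exists (a *: delta_mx 0 i).
by rewrite -!scalemxAl -!rowE !mxE; split=> // j; rewrite !mxE.
Qed.

Section Diagonal.

Variables (m n : nat) (D : 'M[R]_(m, n)).
Hypothesis D_diag : is_diag_mx D.

Lemma diag_mx_neq0_val i j : D i j != 0 -> i = j :> nat.
Proof.
by apply: contraNeq => neq_ij; apply/eqP; move/is_diag_mxP: D_diag; apply.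
Qed.

Lemma diag_mx_row_uniq i j k : D i j != 0 -> D i k != 0 -> j = k.
Proof.
move=> /diag_mx_neq0_val eq_ij /diag_mx_neq0_val eq_ik.
by apply: val_inj; rewrite /= -eq_ij.
Qed.

Lemma diag_mx_col_uniq i i' j : D i j != 0 -> D i' j != 0 -> i = i'.
Proof.
move=> /diag_mx_neq0_val eq_ij /diag_mx_neq0_val eq_i'j.
by apply: val_inj; rewrite /= eq_ij.
Qed.

Lemma diag_padic_obstruction (v : 'cV[R]_m) i j :
  ~ padic_rat p ((D i j)^-1 * v i 0) -> padic_obstruction D v.
Proof.
move=> not_padic; have [Dij0 | Dij_neq0] := eqVneq (D i j) 0.
  by case: not_padic; rewrite Dij0 invr0 mul0r; apply: (padic_int 0).
apply: (padic_obstruction_row _ not_padic) => k.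
have [Dik0 | Dik_neq0] := eqVneq (D i k) 0.
  by rewrite Dik0 mulr0; apply: (integral_int 0).
by rewrite -(diag_mx_row_uniq Dij_neq0 Dik_neq0) mulVf //; apply: (integral_int 1).
Qed.

Lemma zero_row_padic_obstruction (v : 'cV[R]_m) i :
  (forall j, D i j = 0) -> v i 0 != 0 -> padic_obstruction D v.
Proof.
move=> row0 vi_neq0.
apply: (padic_obstruction_row (i := i) (a := (v i 0 * p.+1%:R)^-1)) => [j|].
  by rewrite row0 mulr0; apply: (integral_int 0).
by rewrite invfM mulrAC mulVf // mul1r; apply: not_padic_inv_succ.
Qed.

(* The candidate solution is x = D^+ v, with D^+ the transpose of the entrywise
   inverse of D: a pseudo-inverse, since D is diagonal and 0^-1 = 0. *)
Lemma diag_padic_solvable (v : 'cV[R]_m) :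
  (forall i j, padic_rat p ((D i j)^-1 * v i 0)) ->
  (forall i, (forall j, D i j = 0) -> v i 0 = 0) -> padic_solvable D v.
Proof.
move=> padic_quot zero_rows; pose x := (map_mx GRing.inv D)^T *m v.
exists x; split; first by move=> j; rewrite mxE; apply: padic_sum => i; rewrite !mxE.
apply/matrixP => i k; rewrite ord1 {k}.
have entry j : D i j * x j 0 = D i j * ((D i j)^-1 * v i 0).
  have [-> | Dij_neq0] := eqVneq (D i j) 0; first by rewrite !mul0r.
  rewrite mxE (bigD1 i) //= big1 ?addr0 ?mxE // => i' ne_i'i.
  have [Di'j0 | Di'j_neq0] := eqVneq (D i' j) 0.
    by rewrite !mxE Di'j0 invr0 mul0r.
  by rewrite (diag_mx_col_uniq Di'j_neq0 Dij_neq0) eqxx in ne_i'i.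
rewrite mxE; under eq_bigr do rewrite entry.
have [[j Dij_neq0] | row0] := classic (exists j, D i j != 0); last first.
  have vi0 : v i 0 = 0.
    by apply: zero_rows => j; apply/eqP; apply: contra_notT row0; exists j.
  by rewrite vi0 big1 // => j _; rewrite !mulr0.
rewrite (bigD1 j) //= big1 ?addr0; first by rewrite mulVKf.
move=> k ne_kj; have [-> | Dik_neq0] := eqVneq (D i k) 0; first by rewrite mul0r.
by rewrite (diag_mx_row_uniq Dik_neq0 Dij_neq0) eqxx in ne_kj.
Qed.

Lemma diag_padic_alternative (v : 'cV[R]_m) :
  padic_solvable D v \/ padic_obstruction D v.
Proof.
have [obstructed | no_obstruction] := classic (padic_obstruction D v).
  by right.
left; apply: diag_padic_solvable => [i j | i row0].
  apply: NNPP => not_padic; apply: no_obstruction.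
  exact: diag_padic_obstruction not_padic.
apply: NNPP => /eqP vi_neq0; apply: no_obstruction.
exact: zero_row_padic_obstruction row0 vi_neq0.
Qed.

End Diagonal.

End PadicRationals.

Theorem lemma2p3 (m n : nat) (A : 'M[int]_(m, n)) (b : 'cV[int]_m) (p : nat)
  (hp : prime p) :
  let P := exists x : 'cV[R]_n,
             (forall i, padic_rat p (x i 0)) /\ intmx A *m x = intmx b in
  let Q := exists y : 'rV[R]_m,
             (forall j, integral ((y *m intmx A) 0 j)) /\
             ~ padic_rat p ((y *m intmx b) 0 0) in
  (P \/ Q) /\ ~ (P /\ Q).
Proof.
have p_gt0 := prime_gt0 hp.
split; last exact: padic_solvable_obstruction_exclusive (integral_intmx A).
have [L unitL [U unitU [d _ defA]]] := int_Smith_normal_form A.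
set D := \matrix_(i, j) _ in defA.
have D_diag : is_diag_mx (intmx D).
  by apply/is_diag_mxP => i j ne_ij; rewrite !mxE (negbTE ne_ij) mulr0n.
have -> : intmx A = intmx L *m intmx D *m intmx U by rewrite defA !intmxM.
have -> : intmx b = intmx L *m intmx (invmx L *m b) by rewrite -intmxM mulKVmx.
have UU' := intmx_mulmxV unitU; have L'L := intmx_mulVmx unitL.
have [solvable | obstructed] :=
  diag_padic_alternative p_gt0 D_diag (intmx (invmx L *m b)).
  left; exact (padic_solvable_mulmx p_gt0 _ (integral_intmx _) UU' solvable).
right; exact (padic_obstruction_mulmx (integral_intmx _) L'L obstructed).
Qed.
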